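(* Let $B\ge 2$ and $\eta\in\mathbb{N}$. Then $\alpha_{\eta+1}\le 2B$, i.e. $\gamma_B(\eta+1)$ has at most $2B$ base-$B$ digits different from $B-1$.
   Context: Fix an integer base $B \geq 2$. Every integer $x>0$ is written uniquely as $x=\sum_{i=0}^{L(x)-1} x_i B^i$ with digits $0 \le x_i \le B-1$ and $x_{L(x)-1}\neq 0$. Define $\mathcal{H}_B(x)=\sum_{i=0}^{L(x)-1} x_i^2$, $\mathcal{H}_B(0)=0$, $\mathcal{H}_B^0(x)=x$, $\mathcal{H}_B^{n}=\mathcal{H}_B\circ\mathcal{H}_B^{n-1}$. A positive integer $x$ is happy if $\mathcal{H}_B^n(x)=1$ for some $n\in\mathbb{N}$; its height is $\eta_B(x)=\min\{\alpha\in\mathbb{N}:\mathcal{H}_B^\alpha(x)=1\}$. For $n\in\mathbb{N}$, $\gamma_B(n)$ denotes the smallest happy number $x\ge 1$ with $\eta_B(x)=n$. For each $n$, $L_n=L(\gamma_B(n))$ is the number of base-$B$ digits of $\gamma_B(n)$, $t_n$ is the number of those digits equal to $B-1$, and $\alpha_n=L_n-t_n$ is the number of digits smaller than $B-1$. *)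

From mathcomp Require Import all_boot.
Set Implicit Arguments. Unset Strict Implicit. Unset Printing Implicit Defensive.

(* Base-B digits of x, least significant first; [::] for x = 0.
   Fuel f >= x suffices since x %/ B < x for x > 0, B >= 2. *)
Fixpoint digits_fuel (B f x : nat) : seq nat :=
  match f with
  | 0 => [::]
  | f'.+1 => if x == 0 then [::] else (x %% B) :: digits_fuel B f' (x %/ B)
  end.

Definition digits (B x : nat) : seq nat := digits_fuel B x x.

Definition H (B x : nat) : nat := sumn [seq d ^ 2 | d <- digits B x].

Definition Hiter (B n x : nat) : nat := iter n (H B) x.

Definition happy (B x : nat) : Prop := 0 < x /\ exists n, Hiter B n x = 1.

Definition height_is (B x n : nat) : Prop :=
  happy B x /\ Hiter B n x = 1 /\ forall m, m < n -> Hiter B m x <> 1.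

Definition is_gamma (B n x : nat) : Prop :=
  height_is B x n /\ forall y, 0 < y -> height_is B y n -> x <= y.

Definition alpha (B x : nat) : nat := count (fun d => d < B.-1) (digits B x).

From Stdlib Require Import ZArith Lia.
From mathcomp Require Import all_boot zify.

(* Suppose x has k > 2B digits below M = B - 1 and t digits equal to M, so
   H(x) = S + t M^2 with S <= k (M-1)^2.  Write S = q M^2 + r with r < M^2;
   by Lagrange's theorem r = a^2 + b^2 + c^2 + d^2 with a, b, c, d < M, and a
   counting argument gives q + 4 < k.  The number y with digits
   a, b, c, d, then q + t digits M, has H(y) = H(x) and fewer digits than x,
   so y < x; yet y has the height of x (replacing y = 1 by B, whose image is
   also 1), contradicting the minimality of x. *)

Section IntegerDescent.
Local Open Scope Z_scope.

Definition sq4 (a b c d : Z) : Z := a^2 + b^2 + c^2 + d^2.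

Definition sum4sq (n : Z) : Prop := exists a b c d : Z, n = sq4 a b c d.

(* Euler's four-square identity: the quaternion norm is multiplicative. *)
Lemma euler_four_square a1 a2 a3 a4 b1 b2 b3 b4 :
  sq4 a1 a2 a3 a4 * sq4 b1 b2 b3 b4 =
  sq4 (a1*b1 + a2*b2 + a3*b3 + a4*b4) (a1*b2 - a2*b1 + a3*b4 - a4*b3)
      (a1*b3 - a2*b4 - a3*b1 + a4*b2) (a1*b4 + a2*b3 - a3*b2 - a4*b1).
Proof. rewrite /sq4; ring. Qed.

Lemma sum4sq_mul a b : sum4sq a -> sum4sq b -> sum4sq (a * b).
Proof.
move=> [a1 [a2 [a3 [a4 ->]]]] [b1 [b2 [b3 [b4 ->]]]].
rewrite euler_four_square; do 4 eexists; reflexivity.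
Qed.

Lemma centered_residue x m : 1 < m ->
  exists q y, x = y + m * q /\ - m < 2 * y <= m.
Proof.
move=> m_gt1; set c := (m - 1) / 2.
have := Z.div_mod (m - 1) 2 ltac:(lia); have := Z.mod_pos_bound (m - 1) 2 ltac:(lia).
have := Z.div_mod (x + c) m ltac:(lia); have := Z.mod_pos_bound (x + c) m ltac:(lia).
exists ((x + c) / m), (x - m * ((x + c) / m)); lia.
Qed.

Lemma centered_sq4_bounds m y1 y2 y3 y4 :
  - m < 2 * y1 <= m -> - m < 2 * y2 <= m -> - m < 2 * y3 <= m -> - m < 2 * y4 <= m ->
  [/\ 0 <= sq4 y1 y2 y3 y4 <= m^2,
      sq4 y1 y2 y3 y4 = 0 -> y1 = 0 /\ y2 = 0 /\ y3 = 0 /\ y4 = 0 &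
      sq4 y1 y2 y3 y4 = m^2 -> 2 * y1 = m /\ 2 * y2 = m /\ 2 * y3 = m /\ 2 * y4 = m].
Proof.
rewrite /sq4 => H1 H2 H3 H4.
have S1 : 4 * y1^2 <= m^2 by nia.
have S2 : 4 * y2^2 <= m^2 by nia.
have S3 : 4 * y3^2 <= m^2 by nia.
have S4 : 4 * y4^2 <= m^2 by nia.
split; first (split; nia).
  by move=> E; repeat split; nia.
by move=> E; repeat split; nia.
Qed.

Variable p : Z.
Hypothesis p_prime : forall d, 1 < d < p -> ~ (d | p).

(* Reduce the four roots mod m to
   centered residues y_i; their norm is m * r with 0 <= r <= m, the extreme
   cases forcing m | p, and Euler's identity applied to the y_i and the
   original roots produces four squares all divisible by m. *)
Lemma descent_step m : 1 < m < p -> sum4sq (m * p) ->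
  exists r, 0 < r < m /\ sum4sq (r * p).
Proof.
move=> [m_gt1 m_ltp] [x1 [x2 [x3 [x4 Ex]]]].
have [q1 [y1 [Ex1 Hy1]]] := centered_residue x1 m m_gt1.
have [q2 [y2 [Ex2 Hy2]]] := centered_residue x2 m m_gt1.
have [q3 [y3 [Ex3 Hy3]]] := centered_residue x3 m m_gt1.
have [q4 [y4 [Ex4 Hy4]]] := centered_residue x4 m m_gt1.
subst x1 x2 x3 x4.
set r := p - (q1 * (2*y1 + m*q1) + q2 * (2*y2 + m*q2)
            + q3 * (2*y3 + m*q3) + q4 * (2*y4 + m*q4)).
have Er : m * r = sq4 y1 y2 y3 y4.
  by rewrite /r Z.mul_sub_distr_l Ex /sq4; ring.
clearbody r.
have [[N_ge0 N_le] N_eq0 N_eqm] := centered_sq4_bounds _ _ _ _ _ Hy1 Hy2 Hy3 Hy4.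
have r_neq0 : r <> 0.
  move=> r0; rewrite r0 Z.mul_0_r in Er.
  have [y1_0 [y2_0 [y3_0 y4_0]]] := N_eq0 (esym Er).
  apply: (p_prime m); first lia.
  exists (q1^2 + q2^2 + q3^2 + q4^2); apply: (Z.mul_reg_l _ _ m); first lia.
  rewrite Ex y1_0 y2_0 y3_0 y4_0 /sq4; ring.
have r_neqm : r <> m.
  move=> rm; rewrite rm -Z.pow_2_r in Er.
  have [y1_m [y2_m [y3_m y4_m]]] := N_eqm (esym Er).
  have y2_y1 : y2 = y1 by lia.
  have y3_y1 : y3 = y1 by lia.
  have y4_y1 : y4 = y1 by lia.
  subst y2 y3 y4.
  apply: (p_prime m); first lia.
  exists (1 + q1 + q1^2 + q2 + q2^2 + q3 + q3^2 + q4 + q4^2).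
  apply: (Z.mul_reg_l _ _ (4 * m)); first lia.
  rewrite -Z.mul_assoc Ex /sq4 -y1_m; ring.
have r_bounds : 0 < r < m.
  have : 0 <= m * r <= m * m by rewrite Er -Z.pow_2_r.
  by nia.
exists r; split => //.
set w1 := r + (q1*y1 + q2*y2 + q3*y3 + q4*y4).
set w2 := y1*q2 - y2*q1 + y3*q4 - y4*q3.
set w3 := y1*q3 - y2*q4 - y3*q1 + y4*q2.
set w4 := y1*q4 + y2*q3 - y3*q2 - y4*q1.
exists w1, w2, w3, w4; apply: (Z.mul_reg_l _ _ (m^2)); first lia.
have -> : m^2 * (r * p) = (m * r) * (m * p) by ring.
rewrite Er Ex euler_four_square.
have -> : y1*(y1 + m*q1) + y2*(y2 + m*q2) + y3*(y3 + m*q3) + y4*(y4 + m*q4)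
          = m * w1 by rewrite /w1 [m * (r + _)]Z.mul_add_distr_l Er /sq4; ring.
rewrite /w2 /w3 /w4 /sq4; ring.
Qed.

Lemma sum4sq_of_multiple m : 0 < m < p -> sum4sq (m * p) -> sum4sq p.
Proof.
move=> Hm; have m_ge0 : 0 <= m by lia.
move: m m_ge0 Hm; apply: Z_lt_induction => m IH Hm Hs.
have [m1 | m_neq1] := Z.eq_dec m 1; first by rewrite m1 Z.mul_1_l in Hs.
have [r [Hr Hrs]] : exists r, 0 < r < m /\ sum4sq (r * p).
  by apply: descent_step => //; lia.
by apply: (IH r) => //; lia.
Qed.

End IntegerDescent.

Lemma eqn_mod_subLR d N u v : u <= N -> v <= N ->
  (N - u == N - v %[mod d]) = (u == v %[mod d]).
Proof.
move=> uN vN; rewrite -(eqn_modDr (u + v)).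
have -> : N - u + (u + v) = N + v by lia.
have -> : N - v + (u + v) = N + u by lia.
by rewrite eqn_modDl eq_sym.
Qed.

Section PrimeModulus.
Variable p : nat.
Hypothesis p_prime : prime p.

Lemma half_range x : x < (p./2).+1 -> 2 * x <= p.
Proof. rewrite ltnS => hx; have := odd_double_half p; lia. Qed.

(* Distinct residues in [0, p/2] have distinct squares mod p: if
   p | (x - y)(x + y) then x - y = 0 or x + y is 0 or p. *)
Lemma half_square_inj x y : 2 * x <= p -> 2 * y <= p ->
  x ^ 2 = y ^ 2 %[mod p] -> x = y.
Proof.
wlog le_yx : x y / y <= x => [W hx hy E|hx hy /eqP].
  by case: (leqP y x) => [|/ltnW] le; [apply: W | apply/esym/W].
rewrite eqn_mod_dvd ?leq_exp2r // subn_sqr Euclid_dvdM //.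
have p_gt0 := prime_gt0 p_prime.
case/orP=> [/dvdn_leq|/dvdn_leq]; case: posnP => //; lia.
Qed.

(* Pigeonhole: the p/2 + 1 values x^2 and the p/2 + 1 values -1 - y^2
   cannot all be distinct mod p, which yields x^2 + y^2 + 1 = 0 mod p. *)
Lemma square_collision :
  exists x y, [/\ 2 * x <= p, 2 * y <= p & p %| x ^ 2 + y ^ 2 + 1].
Proof.
have p_gt1 := prime_gt1 p_prime.
set I := iota 0 (p./2).+1; set N := p * p.
have in_half z : z \in I -> 2 * z <= p by rewrite mem_iota => /andP[_ /half_range].
have small y : y \in I -> y ^ 2 + 1 <= N by move/in_half; nia.
set sq := [seq x ^ 2 %% p | x <- I].
set cosq := [seq (N - (y ^ 2 + 1)) %% p | y <- I].
have sq_uniq : uniq sq.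
  rewrite map_inj_in_uniq ?iota_uniq // => x y /in_half hx /in_half hy.
  exact: half_square_inj.
have cosq_uniq : uniq cosq.
  rewrite map_inj_in_uniq ?iota_uniq // => x y hx hy /eqP.
  rewrite eqn_mod_subLR ?small // eqn_modDr => /eqP.
  exact: half_square_inj (in_half _ hx) (in_half _ hy).
have : ~~ uniq (sq ++ cosq).
  apply/negP => U; have : {subset sq ++ cosq <= iota 0 p}.
    by move=> r; rewrite mem_cat mem_iota => /orP[] /mapP[z _ ->]; lia.
  move/(uniq_leq_size U); rewrite size_cat !size_map !size_iota.
  by have := odd_double_half p; lia.
rewrite cat_uniq sq_uniq cosq_uniq andbT andTb negbK.
move/hasP=> [r /mapP[y hy ->] /mapP[x hx E]].
exists x, y; split; [exact: in_half | exact: in_half |].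
by rewrite /dvdn -addnA -modnDml -E modnDml subnK ?small // modnMl.
Qed.

End PrimeModulus.

Lemma Z_no_proper_divisor p : prime p ->
  forall d, (1 < d < Z.of_nat p)%Z -> ~ (d | Z.of_nat p)%Z.
Proof.
move=> p_pr d hd [k Ek].
have k_gt0 : (0 < k)%Z by nia.
have : Z.to_nat d %| p by apply/dvdnP; exists (Z.to_nat k); lia.
by case/primeP: p_pr => _ /[apply] /orP[] /eqP; lia.
Qed.

(* Lagrange's theorem for a prime p: descend from the multiple
   x^2 + y^2 + 1^2 + 0^2 of p, which is smaller than p^2. *)
Lemma prime_sum4sq p : prime p -> sum4sq (Z.of_nat p).
Proof.
move=> p_pr; have p_gt1 := prime_gt1 p_pr.
have [x [y [hx hy /dvdnP[m Em]]]] := square_collision p p_pr.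
apply: (sum4sq_of_multiple _ (Z_no_proper_divisor p p_pr) (Z.of_nat m)); first nia.
by exists (Z.of_nat x), (Z.of_nat y), 1%Z, 0%Z; rewrite /sq4; lia.
Qed.

(* Lagrange's four-square theorem, by multiplicativity over a prime factor. *)
Lemma sum4sq_nat n : sum4sq (Z.of_nat n).
Proof.
elim/ltn_ind: n => n IH; case: (leqP n 1) => [n_le1 | n_gt1].
  by exists (Z.of_nat n), 0%Z, 0%Z, 0%Z; rewrite /sq4; nia.
have p_pr := pdiv_prime n_gt1; have p_gt1 := prime_gt1 p_pr.
have [k Ek] := dvdnP (pdiv_dvd n).
rewrite Ek Nat2Z.inj_mul; apply: sum4sq_mul; last exact: prime_sum4sq.
by apply: IH; nia.
Qed.

Lemma abs_nat_sq (a : Z) : Z.of_nat (Z.abs_nat a ^ 2) = (a ^ 2)%Z.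
Proof. by lia. Qed.

Theorem four_squares n : exists a b c d, n = a ^ 2 + b ^ 2 + c ^ 2 + d ^ 2.
Proof.
have [a [b [c [d E]]]] := sum4sq_nat n.
exists (Z.abs_nat a), (Z.abs_nat b), (Z.abs_nat c), (Z.abs_nat d).
by apply: Nat2Z.inj; rewrite !Nat2Z.inj_add !abs_nat_sq.
Qed.

Section Digits.
Variable B : nat.
Hypothesis B_gt1 : 1 < B.

Lemma digits_fuel_enough f g x :
  x <= f -> x <= g -> digits_fuel B f x = digits_fuel B g x.
Proof.
elim: f g x => [|f IH] [|g] x /= le_xf le_xg //; try by have -> : x = 0 by lia.
case: (posnP x) => [// | x_gt0].
by have lt_div := ltn_Pdiv B_gt1 x_gt0; congr (_ :: _); apply: IH; lia.
Qed.

Lemma digits_rec x : 0 < x -> digits B x = x %% B :: digits B (x %/ B).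
Proof.
case: x => [//|x] _; rewrite /digits /=; congr (_ :: _).
by apply: digits_fuel_enough => //; have := ltn_Pdiv B_gt1 (ltn0Sn x); lia.
Qed.

Lemma digits_small x : all (fun d => d < B) (digits B x).
Proof.
elim/ltn_ind: x => x IH; case: (posnP x) => [-> //|x_gt0].
by rewrite digits_rec //= ltn_mod (ltnW B_gt1) /= IH // ltn_Pdiv.
Qed.

Lemma size_digits_le x n : (size (digits B x) <= n) = (x < B ^ n).
Proof.
elim: n x => [|n IH] x; case: (posnP x) => [-> //|x_gt0].
- by rewrite digits_rec // expn0 ltnNge x_gt0.
- by rewrite expn_gt0 (ltnW B_gt1).
by rewrite digits_rec //= ltnS IH expnSr -ltn_divLR // (ltnW B_gt1).
Qed.

Definition of_digits (l : seq nat) : nat := foldr (fun d v => d + B * v) 0 l.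

Lemma of_digits_lt l : all (fun d => d < B) l -> of_digits l < B ^ size l.
Proof.
elim: l => [//|d l IH] /= /andP[d_lt /IH]; rewrite expnS; nia.
Qed.

Lemma of_digits_lt_shorter x l : all (fun d => d < B) l ->
  size l < size (digits B x) -> of_digits l < x.
Proof.
move=> l_small; rewrite ltnNge size_digits_le -leqNgt.
exact/leq_trans/of_digits_lt.
Qed.

Lemma H_cons d v : d < B -> H B (d + B * v) = d ^ 2 + H B v.
Proof.
move=> d_lt; case: (posnP (d + B * v)) => [zero | pos].
  have [-> ->] : d = 0 /\ v = 0 by nia.
  by rewrite muln0.
rewrite /H digits_rec //= (addnC d) (mulnC B) modnMDl modn_small //.
by rewrite divnMDl ?divn_small ?addn0 //; lia.
Qed.

Lemma H_of_digits l : all (fun d => d < B) l ->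
  H B (of_digits l) = sumn [seq d ^ 2 | d <- l].
Proof. by elim: l => [//|d l IH] /= /andP[d_lt /IH <-]; rewrite H_cons. Qed.

Lemma H_one : H B 1 = 1.
Proof. by have := H_cons 1 0 B_gt1; rewrite muln0 addn0 => ->. Qed.

Lemma H_base : H B B = 1.
Proof. by have := H_cons 0 1 (ltnW B_gt1); rewrite muln1 add0n H_one => ->. Qed.

End Digits.

Section Heights.
Variable B : nat.
Hypothesis B_gt1 : 1 < B.

Lemma Hiter_zero n : Hiter B n 0 = 0.
Proof. by elim: n => //= n; rewrite /Hiter /= => ->. Qed.

Lemma height_same_image x y n : H B y = H B x -> 0 < y -> y <> 1 ->
  height_is B x n.+1 -> height_is B y n.+1.
Proof.
move=> Hyx y_gt0 y_neq1 [_ [Hx_n Hx_min]].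
have same k : Hiter B k.+1 y = Hiter B k.+1 x by rewrite /Hiter !iterSr Hyx.
split; first by split => //; exists n.+1; rewrite same.
by split=> [|[|k] lt_k]; rewrite ?same //; apply: Hx_min.
Qed.

(* The minimality of gamma_B(n+1) against any y with the same image: either
   x <= y, or (when y = 1, replaced by B whose image is also 1) x <= B. *)
Lemma gamma_le_preimage n x y : is_gamma B n.+1 x -> H B y = H B x ->
  x <= y \/ x <= B.
Proof.
move=> [x_height x_min] Hyx; have [[x_gt0 _] [x_n _]] := x_height.
case: (posnP y) => [y0 | y_gt0].
  by move: x_n; rewrite /Hiter iterSr -Hyx y0 -/(Hiter B n 0) Hiter_zero.
case: (eqVneq y 1) => [y1 | /eqP y_neq1].
  right; apply: x_min; first exact: ltnW.
  apply: height_same_image x_height; [|exact: ltnW|lia].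
  by rewrite H_base // -Hyx y1 H_one.
by left; apply: x_min => //; apply: height_same_image x_height.
Qed.

End Heights.

Lemma sum_sq_split c l : all (fun d => d <= c) l ->
  sumn [seq d ^ 2 | d <- l] =
  sumn [seq d ^ 2 | d <- l & d < c] + (size l - count (fun d => d < c) l) * c ^ 2.
Proof.
elim: l => [//|d l IH] /= /andP[d_le /IH ->]; have := count_size (fun d => d < c) l.
case: ltnP => d_c /= C_le; first by rewrite add1n subSS addnA.
by rewrite add0n subSn // mulSn (_ : d = c); lia.
Qed.

Lemma sum_sq_le c l : all (fun d => d <= c) l ->
  sumn [seq d ^ 2 | d <- l] <= size l * c ^ 2.
Proof.
elim: l => [//|d l IH] /= /andP[d_le /IH le_sum].
by rewrite mulSn leq_add // leq_exp2r.
Qed.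

Lemma quotient_bound N k q : 2 * N + 5 <= k -> q * N.+1 ^ 2 <= k * N ^ 2 -> q + 4 < k.
Proof.
move=> k_large q_le; rewrite ltnNge; apply/negP => k_le.
have : (k - 4) * N.+1 ^ 2 <= k * N ^ 2 by apply: leq_trans q_le; rewrite leq_mul2r; lia.
have : (2 * N + 5) * (2 * N + 1) <= k * (2 * N + 1) by rewrite leq_mul2r k_large orbT.
by nia.
Qed.

(* The heart of the bound: k squares of numbers at most N, with k >= 2N + 5,
   can be rewritten as fewer than k squares of numbers at most N + 1.  Write
   the sum as q (N+1)^2 + r with r < (N+1)^2 a sum of four squares; then
   q + 4 < k by quotient_bound. *)
Lemma fewer_squares N k S : 2 * N + 5 <= k -> S <= k * N ^ 2 ->
  exists l, [/\ all (fun d => d <= N.+1) l, size l < k & sumn [seq d ^ 2 | d <- l] = S].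
Proof.
move=> k_large S_le.
have S_eq := divn_eq S (N.+1 ^ 2); have r_lt := ltn_pmod S (expn_gt0 N.+1 2).
set q := S %/ N.+1 ^ 2 in S_eq *; set r := S %% N.+1 ^ 2 in S_eq r_lt *.
have [a [b [c [d r_eq]]]] := four_squares r.
exists ([:: a; b; c; d] ++ nseq q N.+1); split.
- rewrite all_cat all_nseq leqnn orbT andbT /=.
  have sq_le z : z ^ 2 <= r -> z <= N.+1.
    by move=> z_le; rewrite -(leq_exp2r _ _ (ltn0Sn 1)); lia.
  by rewrite !sq_le //; lia.
- rewrite size_cat size_nseq /= addnC; apply: quotient_bound k_large _; lia.
by rewrite map_cat sumn_cat map_nseq sumn_nseq /=; lia.
Qed.

Theorem corollary2p5 (B eta x : nat) :
  2 <= B -> is_gamma B eta.+1 x -> alpha B x <= 2 * B.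
Proof.
move=> B_ge2 x_gamma; rewrite leqNgt; apply/negP => many_small.
have [N B_eq] : exists N, B = N.+2 by exists B.-2; lia.
subst B; have B_gt1 : 1 < N.+2 by [].
set ds := digits N.+2 x; set k := alpha N.+2 x.
have k_le : k <= size ds := count_size _ _.
set S := sumn [seq d ^ 2 | d <- ds & d < N.+1].
have Hx : H N.+2 x = S + (size ds - k) * N.+1 ^ 2 := sum_sq_split _ _ (digits_small _ B_gt1 x).
have S_le : S <= k * N ^ 2.
  by rewrite /k /alpha -size_filter; apply: sum_sq_le; apply: filter_all.
have k_large : 2 * N + 5 <= k by lia.
have [l [l_le l_size l_sum]] := fewer_squares N k S k_large S_le.
set ys := l ++ nseq (size ds - k) N.+1.
have ys_small : all (fun d => d < N.+2) ys by rewrite all_cat all_nseq l_le leqnn orbT.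
have Hy : H N.+2 (of_digits N.+2 ys) = H N.+2 x.
  by rewrite H_of_digits // Hx map_cat sumn_cat l_sum map_nseq sumn_nseq mulnC.
have y_lt : of_digits N.+2 ys < x.
  by apply: of_digits_lt_shorter => //; rewrite -/ds size_cat size_nseq; lia.
have B_lt : N.+2 < x.
  have : ~~ (x < N.+2 ^ 2) by rewrite -size_digits_le // -ltnNge -/ds; lia.
  by nia.
by have [] := gamma_le_preimage _ B_gt1 _ _ _ x_gamma Hy; lia.
Qed.
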